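(* There exist a finite set $\mathcal{P}$ of points in the Euclidean plane $\mathbb{R}^2$ and an edge price $\alpha>0$ such that the greedy-routing network creation game on $\mathcal{P}$ (with Euclidean distances) and edge price $\alpha$ has no Greedy Equilibrium, and hence no Nash equilibrium.
   Context: Game on a finite metric space $(\mathcal{P},d)$ with edge price $\alpha>0$: agents are the points of $\mathcal{P}$; agent $u$'s strategy is $S_u\subseteq\mathcal{P}\setminus\{u\}$; a profile $\mathbf{s}$ defines the directed network with arcs $(u,v)$, $v\in S_u$, of length $d(u,v)$. A greedy path from $u$ to $v$ is a directed path $u=x_1,\dots,x_j=v$ of arcs with $d(x_i,v)>d(x_{i+1},v)$ for all $i$. $\mathrm{stretch}(u,v)$ is the minimum length of a greedy path from $u$ to $v$ divided by $d(u,v)$, or a fixed sufficiently large penalty constant $Z$ if none exists. Cost: $c_u(\mathbf{s})=\sum_{v\ne u}\mathrm{stretch}(u,v)+\alpha|S_u|$. A Greedy Equilibrium is a profile in which no agent can strictly decrease its cost by adding one element to, deleting one element from, or swapping one element of its strategy (others fixed). A Nash equilibrium is a profile in which no agent can strictly decrease its cost by any change of its own strategy. *)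

From mathcomp Require Import all_boot all_order all_algebra.
From mathcomp Require Import boolp classical_sets reals Rstruct.
Set Implicit Arguments. Unset Strict Implicit. Unset Printing Implicit Defensive.
Import Order.TTheory GRing.Theory Num.Theory.
Local Open Scope ring_scope.

Notation RR := Rdefinitions.R (only parsing).

Definition euclid (p q : RR * RR) : RR :=
  Num.sqrt ((p.1 - q.1) ^+ 2 + (p.2 - q.2) ^+ 2).

Section Game.
(* Agents are the n points of P, indexed by 'I_n; pos gives their coordinates
   (pos is required injective in the theorem so that P has n distinct points). *)
Variables (n : nat) (pos : 'I_n -> RR * RR) (alpha Z : RR).

Definition d (u v : 'I_n) : RR := euclid (pos u) (pos v).

Definition profile := 'I_n -> {set 'I_n}.

(* Strategies must satisfy S_u \subseteq P \ {u}. *)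
Definition valid_strategy (u : 'I_n) (S : {set 'I_n}) : Prop := u \notin S.
Definition valid_profile (s : profile) : Prop := forall u, valid_strategy u (s u).

(* The directed path u = x_1, x :: p (x_2 .. x_j), is a greedy path from u to v
   in the network of s: every step is an arc (x_i, x_{i+1}) with
   x_{i+1} \in S_{x_i} and d(x_i, v) > d(x_{i+1}, v), and it ends at v. *)
Definition greedy_path (s : profile) (u v : 'I_n) (p : seq 'I_n) : Prop :=
  path (fun a b => (b \in s a) && (d b v < d a v)) u p /\ last u p = v.

Definition path_length (u : 'I_n) (p : seq 'I_n) : RR :=
  \sum_(e <- zip (u :: p) p) d e.1 e.2.

(* The minimum over the
   (finite, nonempty) set of greedy path lengths is its infimum. *)
Definition stretch (s : profile) (u v : 'I_n) : RR :=
  if `[< exists p, greedy_path s u v p >] then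
    inf [set path_length u p | p in [set p | greedy_path s u v p]] / d u v
  else Z.

Definition cost (s : profile) (u : 'I_n) : RR :=
  \sum_(v | v != u) stretch s u v + alpha * (#|s u|)%:R.

Definition update (s : profile) (u : 'I_n) (S : {set 'I_n}) : profile :=
  fun x => if x == u then S else s x.

Definition single_change (S S' : {set 'I_n}) : Prop :=
  (exists w, w \notin S /\ S' = w |: S) \/
  (exists w, w \in S /\ S' = S :\ w) \/
  (exists w w', [/\ w \in S, w' \notin S & S' = w' |: (S :\ w)]).

Definition greedy_equilibrium (s : profile) : Prop :=
  forall u S', valid_strategy u S' -> single_change (s u) S' ->
    cost s u <= cost (update s u S') u.

Definition nash_equilibrium (s : profile) : Prop :=
  forall u S', valid_strategy u S' -> cost s u <= cost (update s u S') u.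

End Game.

(** The five points below are 6 to 30 apart, so a greedy path between two of
    them has stretch at most 4 * 30 / 6 = 20.  With alpha = 200, a Greedy
    Equilibrium must join every pair by a greedy path (otherwise buying the direct
    arc trades the penalty Z >= 250 for at most 200 + 20), so each strategy S_u
    covers every target v (some member of S_u is strictly closer to v than u); and
    no arc can be dropped without losing this (otherwise all stretches stay at most
    20 while 200 > 4 * 20 is saved).  Only 64 profiles consist of such
    inclusion-minimal covers, and for each of them a computation exhibits an agent
    whose swap of one arc strictly lowers its cost.  The computation is exact
    integer arithmetic: distances are bracketed to 10^-6 by integer square roots,
    and the new stretches are bounded above and the old ones below through
    potentials along greedy arcs, which are checked arc by arc. *)

From Stdlib Require Import ZArith Lia RIneq.
From mathcomp Require Import all_boot all_order all_algebra.
From mathcomp Require Import boolp classical_sets reals Rstruct.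
From mathcomp Require Import lra.
Import Order.TTheory GRing.Theory Num.Theory.
Set Implicit Arguments. Unset Strict Implicit. Unset Printing Implicit Defensive.
Local Open Scope ring_scope.

Section GreedyPaths.
Variables (n : nat) (pos : 'I_n -> RR * RR).
Implicit Types (s : profile n) (u v w x y : 'I_n) (p : seq 'I_n).
Local Notation d := (d pos).
Local Notation greedy_path := (greedy_path pos).
Local Notation path_length := (path_length pos).

Lemma d_ge0 u v : 0 <= d u v.
Proof. exact: sqrtr_ge0. Qed.

Lemma d_xx v : d v v = 0.
Proof. by rewrite /d /euclid !subrr expr0n /= addr0 sqrtr0. Qed.

Lemma path_length_nil x : path_length x [::] = 0.
Proof. by rewrite /path_length big_nil. Qed.

Lemma path_length_cons x y p : path_length x (y :: p) = d x y + path_length y p.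
Proof. by rewrite /path_length /= big_cons. Qed.

Lemma path_length_ge0 x p : 0 <= path_length x p.
Proof.
elim: p x => [|y p IH] x; first by rewrite path_length_nil.
by rewrite path_length_cons addr_ge0 ?d_ge0.
Qed.

Lemma greedy_path_nil s x v : greedy_path s x v [::] <-> x = v.
Proof. by split => [[]|->]. Qed.

Lemma greedy_path_cons s x v y p : greedy_path s x v (y :: p) <->
  [/\ y \in s x, d y v < d x v & greedy_path s y v p].
Proof.
split; first by case=> /= /andP[/andP[yx ltyx] py] ly.
by case=> yx ltyx [py ly]; split => //=; rewrite yx ltyx.
Qed.

Lemma size_greedy_path s x v p : greedy_path s x v p -> (size p < n)%N.
Proof.
case=> gp _.
have sorted_p : sorted (fun a b => d b v < d a v) (x :: p).
  by apply: sub_path gp => a b /andP[].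
have uniq_p : uniq (x :: p).
  apply: sorted_uniq sorted_p; last by move=> a; rewrite /= ltxx.
  by move=> a b c ab bc; apply: lt_trans bc ab.
by have := card_uniqP uniq_p => /= <-; apply: leq_trans (max_card _) _; rewrite card_ord.
Qed.

Lemma greedy_path_sub s s' x v p : (forall y, s y \subset s' y) ->
  greedy_path s x v p -> greedy_path s' x v p.
Proof.
move=> ss' [gp lp]; split => //; apply: sub_path gp => a b /andP[ba ->].
by rewrite (fintype.subsetP (ss' a)).
Qed.

Lemma greedy_path_update s u S x v p : d x v < d u v ->
  greedy_path s x v p -> greedy_path (update s u S) x v p.
Proof.
elim: p x => [|y p IH] x ltxu; first by move/greedy_path_nil => ->; apply/greedy_path_nil.
case/greedy_path_cons => yx ltyx gp; apply/greedy_path_cons; split => //.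
  by rewrite /update ifN // (contraTneq _ ltxu) // => ->; rewrite ltxx.
exact: IH (lt_trans ltyx ltxu) gp.
Qed.

Lemma potential_le_path_length s v (g : 'I_n -> RR) : g v <= 0 ->
  (forall x y, y \in s x -> d y v < d x v -> g x <= d x y + g y) ->
  forall x p, greedy_path s x v p -> g x <= path_length x p.
Proof.
move=> gv gstep x p; elim: p x => [|y p IH] x.
  by move/greedy_path_nil => ->; rewrite path_length_nil.
case/greedy_path_cons => yx ltyx /IH gy; rewrite path_length_cons.
by apply: le_trans (gstep _ _ yx ltyx) _; rewrite lerD2l.
Qed.

Lemma potential_greedy_path s v (f : 'I_n -> RR) (R : pred 'I_n) : 0 <= f v ->
  (forall x, R x -> x != v ->
     exists y, [/\ R y, y \in s x, d y v < d x v & d x y + f y <= f x]) ->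
  forall x, R x -> exists2 p, greedy_path s x v p & path_length x p <= f x.
Proof.
move=> fv fstep x; have [k] := ubnP #|[pred z | d z v < d x v]|.
elim: k x => // k IH x ltk Rx.
have [->|xv] := eqVneq x v; first by exists [::]; rewrite ?path_length_nil.
have [y [Ry yx ltyx fyx]] := fstep x Rx xv.
have closer : [pred z | d z v < d y v] \proper [pred z | d z v < d x v].
  apply/properP; split; last by exists y; rewrite !inE ?ltxx.
  by apply/fintype.subsetP => z; rewrite !inE => /lt_trans; apply.
have [p gp lp] := IH y (leq_trans (proper_card closer) ltk) Ry.
exists (y :: p); first exact/greedy_path_cons.
by rewrite path_length_cons; apply: le_trans fyx; rewrite lerD2l.
Qed.

Variable Z : RR.
Local Open Scope classical_set_scope.
Local Notation stretch := (stretch pos Z).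
Local Notation greedy_lengths s u v :=
  [set path_length u p | p in [set p | greedy_path s u v p]].

Lemma stretch_reachable s u v : (exists p, greedy_path s u v p) ->
  stretch s u v = inf (greedy_lengths s u v) / d u v.
Proof. by rewrite /stretch; case: asboolP. Qed.

Lemma stretch_unreachable s u v : ~ (exists p, greedy_path s u v p) -> stretch s u v = Z.
Proof. by rewrite /stretch; case: asboolP. Qed.

Lemma stretch_le_path s u v p : greedy_path s u v p -> stretch s u v <= path_length u p / d u v.
Proof.
move=> gp; rewrite stretch_reachable; last by exists p.
rewrite ler_wpM2r ?invr_ge0 ?d_ge0 //; apply: ge_inf; last by exists p.
by exists 0 => _ [q _ <-]; apply: path_length_ge0.
Qed.

Lemma stretch_ge s u v c : (exists p, greedy_path s u v p) ->
  (forall p, greedy_path s u v p -> c <= path_length u p) -> c / d u v <= stretch s u v.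
Proof.
move=> [p gp] lb; rewrite stretch_reachable; last by exists p.
rewrite ler_wpM2r ?invr_ge0 ?d_ge0 //; apply: lb_le_inf; first by exists (path_length u p), p.
by move=> _ [q gq <-]; apply: lb.
Qed.

Lemma sum_others_le u (F : 'I_n -> RR) (c : RR) : (forall v, v != u -> F v <= c) ->
  \sum_(v | v != u) F v <= (n.-1)%:R * c.
Proof.
move=> Fc; apply: le_trans (ler_sum _ Fc) _.
by rewrite sumr_const cardC1 card_ord mulr_natl.
Qed.

Lemma cost_update alpha s u S :
  cost pos alpha Z (update s u S) u = \sum_(v | v != u) stretch (update s u S) u v + alpha * #|S|%:R.
Proof. by rewrite /cost {2}/update eqxx. Qed.

End GreedyPaths.

Section BoundedDistances.
Variables (n : nat) (pos : 'I_n -> RR * RR) (Z : RR) (dmin dmax : RR).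
Hypotheses (dmin_gt0 : 0 < dmin) (dmin_le_dmax : dmin <= dmax).
Hypothesis d_between : forall u v, u != v -> dmin <= d pos u v <= dmax.
Implicit Types (s : profile n) (u v w x y : 'I_n) (p : seq 'I_n).
Local Notation d := (d pos).
Local Notation greedy_path := (greedy_path pos).
Local Notation path_length := (path_length pos).
Local Notation stretch := (stretch pos Z).

Local Notation stretch_max := ((n.-1)%:R * dmax / dmin).

Let dmax_ge0 : 0 <= dmax := le_trans (ltW dmin_gt0) dmin_le_dmax.

Lemma d_gt0 u v : u != v -> 0 < d u v.
Proof. by case/d_between/andP => + _; apply: lt_le_trans. Qed.

Lemma greedy_path_arc s u v : u != v -> v \in s u -> greedy_path s u v [:: v].
Proof.
by move=> uv vu; apply/greedy_path_cons; split; rewrite // d_xx d_gt0.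
Qed.

Lemma path_length_le s x v p : greedy_path s x v p -> path_length x p <= (n.-1)%:R * dmax.
Proof.
move=> gp.
apply: (@le_trans _ _ ((size p)%:R * dmax)); last first.
  by rewrite ler_wpM2r // ler_nat -ltnS (ltn_predK (size_greedy_path gp)) (size_greedy_path gp).
elim: p x gp => [|y p IH] x; first by rewrite path_length_nil mul0r.
case/greedy_path_cons => _ ltyx /IH IHp.
have xy : x != y by apply: contraTneq ltyx => ->; rewrite ltxx.
have /andP[_ dxy] := d_between xy.
by rewrite path_length_cons /= -add1n natrD mulrDl mul1r lerD.
Qed.

Lemma stretch_le_max s u v p : u != v -> greedy_path s u v p -> stretch s u v <= stretch_max.
Proof.
move=> uv gp; apply: le_trans (stretch_le_path Z gp) _.
have /andP[dmin_le _] := d_between uv.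
apply: (@le_trans _ _ (path_length u p / dmin)).
  by rewrite ler_wpM2l ?path_length_ge0 // lef_pV2 ?posrE ?d_gt0.
by apply: ler_wpM2r; [rewrite invr_ge0 ltW | exact: path_length_le gp].
Qed.

Lemma stretch_anti s s' u v : (forall y, s y \subset s' y) -> stretch_max <= Z -> u != v ->
  stretch s' u v <= stretch s u v.
Proof.
move=> ss' maxZ uv.
have [[p gp]|unreach] := pselect (exists p, greedy_path s u v p).
  have dp := d_gt0 uv.
  rewrite -[stretch s' u v](mulfK (lt0r_neq0 dp)); apply: stretch_ge; first by exists p.
  by move=> q gq; rewrite -ler_pdivlMr //; apply: stretch_le_path; apply: greedy_path_sub gq.
rewrite [stretch s u v]stretch_unreachable //.
have [[p gp]|unreach'] := pselect (exists p, greedy_path s' u v p).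
  exact: le_trans (stretch_le_max uv gp) maxZ.
by rewrite stretch_unreachable.
Qed.

Section Equilibrium.
Variables (alpha : RR) (s : profile n).
Hypotheses (s_valid : valid_profile s) (s_ge : greedy_equilibrium pos alpha Z s).
Hypotheses (alpha_gt : (n.-1)%:R * stretch_max < alpha) (Z_gt : alpha + stretch_max < Z).

Let stretch_max_le_Z : stretch_max <= Z.
Proof.
have smax_ge0 : 0 <= stretch_max.
  by apply: mulr_ge0; [apply: mulr_ge0 | rewrite invr_ge0 ltW].
apply/ltW/(lt_trans _ Z_gt); rewrite ltrDr.
exact: le_lt_trans (mulr_ge0 (ler0n RR n.-1) smax_ge0) alpha_gt.
Qed.

Lemma ge_reachable u v : exists p, greedy_path s u v p.
Proof.
have [<-|uv] := eqVneq u v; first by exists [::].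
apply: contrapT => unreach; have vu : v != u by rewrite eq_sym.
have vsu : v \notin s u.
  by apply: contra_notN unreach => vsu; exists [:: v]; apply: greedy_path_arc.
set S' := v |: s u.
have valid' : valid_strategy u S' by rewrite /valid_strategy in_setU1 negb_or uv s_valid.
have change : single_change (s u) S' by left; exists v.
have := s_ge valid' change.
rewrite cost_update /cost cardsU1 vsu natrD [in X in X <= _](bigD1 v vu) [in X in _ <= X](bigD1 v vu) /=.
rewrite (stretch_unreachable Z unreach).
have new_v : stretch (update s u S') u v <= stretch_max.
  by apply: (stretch_le_max uv); apply: greedy_path_arc; rewrite // /update eqxx setU11.
have others : \sum_(i < n | (i != u) && (i != v)) stretch (update s u S') u i <=
              \sum_(i < n | (i != u) && (i != v)) stretch s u i.
  apply: ler_sum => i /andP[iu _]; apply: stretch_anti; rewrite 1?eq_sym //.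
  by move=> y; rewrite /update; case: eqP => [->|_]; [apply: finset.subsetUr | apply: fintype.subxx].
apply/negP; rewrite -ltNge mulrDr mulr1 addrA ltrD2r addrAC ltr_leD //.
by apply: le_lt_trans Z_gt; rewrite addrC lerD2l.
Qed.

Lemma ge_covering u v : u != v -> exists2 y, y \in s u & d y v < d u v.
Proof.
move=> uv; have [[|y p] gp] := ge_reachable u v.
  by move/greedy_path_nil: gp uv => ->; rewrite eqxx.
by case/greedy_path_cons: gp => ysu ltyu _; exists y.
Qed.

Lemma ge_minimal u w : w \in s u ->
  exists2 v, v != u & forall y, y \in s u -> y != w -> d u v <= d y v.
Proof.
move=> wsu; apply: contrapT => no_witness.
have cover v : v != u -> exists y, [/\ y \in s u, y != w & d y v < d u v].
  move=> vu; apply: contrapT => no_y; apply: no_witness; exists v => // y ysu yw.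
  by rewrite leNgt; apply/negP => ltyu; apply: no_y; exists y.
set S' := s u :\ w.
have valid' : valid_strategy u S' by rewrite /valid_strategy in_setD1 negb_and s_valid orbT.
have change : single_change (s u) S' by right; left; exists w.
have := s_ge valid' change.
rewrite cost_update /cost [in X in X <= _](cardsD1 w) wsu natrD.
have new_le : \sum_(v | v != u) stretch (update s u S') u v <= (n.-1)%:R * stretch_max.
  apply: sum_others_le => v vu; have uv : u != v by rewrite eq_sym.
  have [y [ysu yw ltyu]] := cover v vu; have [q gq] := ge_reachable y v.
  apply: (stretch_le_max uv (p := y :: q)); apply/greedy_path_cons; split => //.
    by rewrite /update eqxx in_setD1 yw.
  exact: greedy_path_update.
have old_ge0 : 0 <= \sum_(v | v != u) stretch s u v.
  apply: sumr_ge0 => v _; rewrite -(mul0r (d u v)^-1); apply: (stretch_ge Z (ge_reachable u v)).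
  by move=> p _; apply: path_length_ge0.
apply/negP; rewrite -ltNge mulrDr mulr1 addrA ltrD2r -[X in X < _]add0r.
exact: ler_ltD old_ge0 (le_lt_trans new_le alpha_gt).
Qed.

End Equilibrium.
End BoundedDistances.

Lemma nash_greedy_equilibrium n (pos : 'I_n -> RR * RR) alpha Z s :
  nash_equilibrium pos alpha Z s -> greedy_equilibrium pos alpha Z s.
Proof. by move=> nash u S' valid' _; apply: nash. Qed.

Section IntegerBounds.
Local Open Scope Z_scope.

Lemma IZR_leE (a b : Z) : (IZR a <= IZR b)%R = (a <=? b).
Proof. by apply/idP/idP => [/RleP/le_IZR/Z.leb_le | /Z.leb_le/IZR_le/RleP]. Qed.

Lemma IZR_ltE (a b : Z) : (IZR a < IZR b)%R = (a <? b).
Proof. by apply/idP/idP => [/RltP/lt_IZR/Z.ltb_lt | /Z.ltb_lt/IZR_lt/RltP]. Qed.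

Lemma IZR_gt0 a : 0 < a -> (0 < IZR a)%R.
Proof. by rewrite -R0E IZR_ltE => /Z.ltb_lt. Qed.

Lemma IZR_natE (k : nat) : IZR (Z.of_nat k) = k%:R.
Proof. by rewrite -INR_IZR_INZ INRE. Qed.

Lemma sqrt_IZR_sqr (a : Z) : 0 <= a -> Num.sqrt (IZR (a * a)) = IZR a.
Proof.
by move=> a_ge0; rewrite mult_IZR RmultE -expr2 sqrtr_sqr ger0_norm // -R0E IZR_leE; apply/Z.leb_le.
Qed.

Lemma IZR_le_sqrt (a m : Z) : 0 <= a -> a * a <= m -> (IZR a <= Num.sqrt (IZR m))%R.
Proof.
by move=> a_ge0 le_am; rewrite -(sqrt_IZR_sqr a_ge0); apply: ler_wsqrtr; rewrite IZR_leE; apply/Z.leb_le.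
Qed.

Lemma sqrt_le_IZR (a m : Z) : 0 <= a -> m <= a * a -> (Num.sqrt (IZR m) <= IZR a)%R.
Proof.
by move=> a_ge0 le_ma; rewrite -(sqrt_IZR_sqr a_ge0); apply: ler_wsqrtr; rewrite IZR_leE; apply/Z.leb_le.
Qed.

End IntegerBounds.

Section Instance.
Local Open Scope Z_scope.

Definition xcoord : seq Z := [:: 27; 9; 20; 2; 15].
Definition ycoord : seq Z := [:: 12; 8; 19; 27; 5].
Definition pts : seq nat := iota 0 5.

Definition sqdist (u v : nat) : Z :=
  let dx := nth 0 xcoord u - nth 0 xcoord v in
  let dy := nth 0 ycoord u - nth 0 ycoord v in dx * dx + dy * dy.

Definition point (i : 'I_5) : RR * RR := (IZR (nth 0 xcoord i), IZR (nth 0 ycoord i)).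

Lemma all_ptsP (P : pred nat) : reflect (forall x : 'I_5, P x) (all P pts).
Proof.
apply: (iffP allP) => [Ppts x | Pord x]; first by apply: Ppts; rewrite mem_iota ltn_ord.
by rewrite mem_iota add0n => x_lt5; apply: (Pord (Ordinal x_lt5)).
Qed.

Lemma has_ptsP (P : pred nat) : reflect (exists x : 'I_5, P x) (has P pts).
Proof.
apply: (iffP hasP) => [[x] | [x Px]]; last by exists (val x); rewrite // mem_iota ltn_ord.
by rewrite mem_iota add0n => x_lt5 Px; exists (Ordinal x_lt5).
Qed.

Lemma nth_map_pts T (x0 : T) (F : nat -> T) (x : 'I_5) : nth x0 [seq F i | i <- pts] x = F x.
Proof. by rewrite (nth_map 0%N) ?size_iota ?nth_iota. Qed.

Lemma sqdist_ge0 u v : 0 <= sqdist u v.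
Proof. by apply: Z.add_nonneg_nonneg; apply: Z.square_nonneg. Qed.

Lemma d_point u v : d point u v = Num.sqrt (IZR (sqdist u v)).
Proof. by rewrite /d /euclid /sqdist plus_IZR !mult_IZR !minus_IZR !expr2. Qed.

Lemma d_point_lt (a b v : 'I_5) : (d point a v < d point b v)%R = (sqdist a v <? sqdist b v).
Proof.
rewrite !d_point; case: (Z.ltb_spec 0 (sqdist b v)) => [b_pos|b_npos].
  by rewrite ltr_sqrt ?IZR_ltE //; apply/Z.ltb_lt.
have -> : sqdist b v = 0 by have := @sqdist_ge0 b v; lia.
rewrite sqrtr0 ltNge sqrtr_ge0; exact/esym/Z.ltb_ge/sqdist_ge0.
Qed.

Lemma sqdist_between :
  all (fun u => all (fun v => (u == v) || (36 <=? sqdist u v) && (sqdist u v <=? 900)) pts) pts.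
Proof. by []. Qed.

End Instance.

Lemma d_point_between u v : u != v -> 6 <= d point u v <= 30.
Proof.
move=> uv; have /all_ptsP/(_ u)/all_ptsP/(_ v) := sqdist_between.
rewrite (negbTE (_ : val u != val v)) //= => /andP[/Z.leb_le ge36 /Z.leb_le le900].
by rewrite d_point -(IZR_natE 6) -(IZR_natE 30) IZR_le_sqrt ?sqrt_le_IZR.
Qed.

Lemma point_injective : injective point.
Proof.
move=> u v eq_uv; apply/eqP; apply: contraT => uv.
have /andP[+ _] := d_point_between uv.
by rewrite {1}/d eq_uv -/(d point v v) d_xx leNgt ltr0n.
Qed.

Section MicroUnits.
Local Open Scope Z_scope.

Definition scale : Z := 1000000.
Definition of_micro (z : Z) : RR := (IZR z / IZR scale)%R.

Lemma IZR_scale_gt0 : (0 < IZR scale)%R.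
Proof. exact: IZR_gt0. Qed.

Lemma of_micro_le a b : (of_micro a <= of_micro b)%R = (a <=? b).
Proof. by rewrite ler_pM2r ?invr_gt0 ?IZR_scale_gt0 // IZR_leE. Qed.

Lemma of_micro_lt a b : (of_micro a < of_micro b)%R = (a <? b).
Proof. by rewrite ltr_pM2r ?invr_gt0 ?IZR_scale_gt0 // IZR_ltE. Qed.

Lemma of_microD a b : of_micro (a + b) = (of_micro a + of_micro b)%R.
Proof. by rewrite /of_micro plus_IZR RplusE mulrDl. Qed.

Lemma of_micro0 : of_micro 0 = 0%R.
Proof. by rewrite /of_micro mul0r. Qed.

Lemma of_micro_div a b : (of_micro a / of_micro b)%R = (IZR a / IZR b)%R.
Proof. by rewrite /of_micro invf_div mulrA divfK // gt_eqF // IZR_scale_gt0. Qed.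

Definition Zdiv_up (a b : Z) : Z := - (- a / b).

Lemma of_micro_ratio_le F L : 0 < L ->
  (of_micro F / of_micro L <= of_micro (Zdiv_up (F * scale) L))%R.
Proof.
move=> L_gt0; rewrite of_micro_div /of_micro ler_pdivrMr ?IZR_gt0 // mulrAC.
rewrite ler_pdivlMr ?IZR_scale_gt0 // -!RmultE -!mult_IZR IZR_leE; apply/Z.leb_le.
by have := Z.mul_div_le (- (F * scale)) L L_gt0; rewrite /Zdiv_up; lia.
Qed.

Lemma of_micro_ratio_ge G H : 0 < H -> (of_micro (G * scale / H) <= of_micro G / of_micro H)%R.
Proof.
move=> H_gt0; rewrite of_micro_div /of_micro ler_pdivlMr ?IZR_gt0 // mulrAC.
rewrite ler_pdivrMr ?IZR_scale_gt0 // -!RmultE -!mult_IZR IZR_leE; apply/Z.leb_le.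
by have := Z.mul_div_le (G * scale) H H_gt0; lia.
Qed.

Definition dlo (u v : nat) : Z := Z.sqrt (sqdist u v * (scale * scale)).
Definition dhi (u v : nat) : Z := dlo u v + 1.

Lemma d_point_scaled u v :
  (d point u v * IZR scale)%R = Num.sqrt (IZR (sqdist u v * (scale * scale))).
Proof.
rewrite d_point mult_IZR RmultE sqrtrM; last by rewrite -R0E IZR_leE; apply/Z.leb_le/sqdist_ge0.
by rewrite sqrt_IZR_sqr.
Qed.

Lemma dlo_le (u v : 'I_5) : (of_micro (dlo u v) <= d point u v)%R.
Proof.
have [] := Z.sqrt_spec (sqdist u v * (scale * scale)); first by have := @sqdist_ge0 u v; rewrite /scale; lia.
rewrite /of_micro ler_pdivrMr ?IZR_scale_gt0 // d_point_scaled => le_sq _.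
by apply: IZR_le_sqrt => //; apply: Z.sqrt_nonneg.
Qed.

Lemma dhi_ge (u v : 'I_5) : (d point u v <= of_micro (dhi u v))%R.
Proof.
have [] := Z.sqrt_spec (sqdist u v * (scale * scale)); first by have := @sqdist_ge0 u v; rewrite /scale; lia.
rewrite /of_micro ler_pdivlMr ?IZR_scale_gt0 // d_point_scaled => _ lt_sq.
rewrite /dhi /dlo; apply: sqrt_le_IZR; last lia.
by have := Z.sqrt_nonneg (sqdist u v * (scale * scale)); lia.
Qed.

Lemma dlo_gt0 (u v : 'I_5) : u != v -> 0 < dlo u v.
Proof.
move=> uv; apply/Z.sqrt_pos; have /all_ptsP/(_ u)/all_ptsP/(_ v) := sqdist_between.
by rewrite (negbTE (_ : val u != val v)) //= => /andP[/Z.leb_le ge36 _]; lia.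
Qed.

End MicroUnits.

Section Certificate.
Local Open Scope Z_scope.

Definition adjacency := seq (seq bool).
Definition arc (A : adjacency) (x y : nat) : bool := nth false (nth [::] A x) y.
Definition greedy_arc (A : adjacency) (v x y : nat) : bool :=
  arc A x y && (sqdist y v <? sqdist x v).

Definition unreached : Z := 10 ^ 12.

Definition pot (f : seq Z) (x : nat) : Z := nth 0 f x.

Variables (lo hi : nat -> nat -> Z).

Definition relax (D : nat -> nat -> Z) (A : adjacency) (v : nat) (f : seq Z) : seq Z :=
  [seq if x == v then 0 else
       foldr (fun y m => if greedy_arc A v x y then Z.min m (D x y + pot f y) else m)
             unreached pts
   | x <- pts].
Definition greedy_dist D A v : seq Z := iter 5%N (relax D A v) (nseq 5%N unreached).

Definition upper_potential (A : adjacency) (v : nat) (f : seq Z) : bool :=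
  (0 <=? pot f v) &&
  all (fun x => (x != v) ==> (pot f x <? unreached) ==>
         has (fun y => greedy_arc A v x y && (hi x y + pot f y <=? pot f x)) pts) pts.

Definition lower_potential (A : adjacency) (v : nat) (g : seq Z) : bool :=
  (pot g v <=? 0) &&
  all (fun x => all (fun y => greedy_arc A v x y ==> (pot g x <=? lo x y + pot g y)) pts) pts.

Definition swap (A : adjacency) (u w w' : nat) : adjacency :=
  [seq if x == u then [seq (y == w') || (y != w) && arc A u y | y <- pts] else nth [::] A x
  | x <- pts].

Definition sum_others (F : nat -> Z) (u : nat) : Z :=
  foldr (fun v acc => if v != u then F v + acc else acc) 0 pts.

Definition swap_improves (A : adjacency) (u w w' : nat) : bool :=
  if [&& arc A u w, ~~ arc A u w' & w' != u] then
    let A' := swap A u w w' in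
    let f v := nth [::] [seq greedy_dist hi A' v | v <- pts] v in
    let g v := nth [::] [seq greedy_dist lo A v | v <- pts] v in
    all (fun v => (v != u) ==>
           [&& upper_potential A' v (f v), pot (f v) u <? unreached,
               lower_potential A v (g v) & 0 <=? pot (g v) u]) pts &&
    (sum_others (fun v => Zdiv_up (pot (f v) u * scale) (lo u v)) u <?
     sum_others (fun v => pot (g v) u * scale / hi u v) u)
  else false.

End Certificate.

Section Search.
Local Open Scope Z_scope.

Definition covering_row (x : nat) (r : seq bool) : bool :=
  all (fun v => (v == x) || has (fun y => nth false r y && (sqdist y v <? sqdist x v)) pts) pts.

Definition minimal_covering_row (x : nat) (r : seq bool) : bool :=
  [&& ~~ nth false r x, covering_row x r &
      all (fun w => nth false r w ==> ~~ covering_row x (set_nth false r w false)) pts].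

Fixpoint bool_rows (k : nat) : seq (seq bool) :=
  if k is k'.+1 then [seq b :: r | b <- [:: true; false], r <- bool_rows k'] else [:: [::]].

Definition candidate_rows (x : nat) : seq (seq bool) :=
  [seq r <- bool_rows 5%N | minimal_covering_row x r].

Definition candidate_profiles : seq adjacency :=
  foldr (fun x P => [seq r :: A | r <- candidate_rows x, A <- P]) [:: [::]] pts.

(* Unlike [has], this stops at the first success: [vm_compute] evaluates both
   arguments of [||]. *)
Fixpoint lazy_has (a : pred nat) (s : seq nat) : bool :=
  if s is x :: s' then (if a x then true else lazy_has a s') else false.

Definition table (D : nat -> nat -> Z) : seq (seq Z) := [seq [seq D u v | v <- pts] | u <- pts].
Definition lookup (T : seq (seq Z)) (u v : nat) : Z := nth 0 (nth [::] T u) v.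

Definition all_improvable : bool :=
  let lo := lookup (table dlo) in let hi := lookup (table dhi) in
  all (fun A => lazy_has (fun u => lazy_has (fun w =>
         lazy_has (swap_improves lo hi A u w) pts) pts) pts) candidate_profiles.

End Search.

Lemma all_improvable_true : all_improvable.
Proof. by vm_compute. Qed.

Lemma of_micro_sum_others (F : nat -> Z) (u : 'I_5) :
  of_micro (sum_others F u) = \sum_(v | v != u) of_micro (F v).
Proof.
rewrite (eq_bigl (fun v : 'I_5 => val v != val u)) //.
rewrite -(big_mkord (fun i => i != val u) (fun i => of_micro (F i))) /sum_others /pts /index_iota subn0.
elim: (iota 0 5) => [|y l IH]; first by rewrite big_nil of_micro0.
by rewrite big_cons -IH [foldr _ _ _]/=; case: ifP => // _; rewrite of_microD.
Qed.

Lemma arc_swap (s : profile 5) (A : adjacency) (u w w' : 'I_5) :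
  (forall x y : 'I_5, arc A x y = (y \in s x)) ->
  forall x y : 'I_5, arc (swap A u w w') x y = (y \in update s u (w' |: (s u :\ w)) x).
Proof.
move=> A_s x y; rewrite {1}/arc /swap nth_map_pts /update.
have [->|xu] := eqVneq x u; first by rewrite !eqxx nth_map_pts A_s in_setU1 in_setD1.
by rewrite !ifN //; apply: A_s.
Qed.

Section Soundness.
Local Open Scope Z_scope.
Variables (lo hi : nat -> nat -> Z).
Hypotheses (lo_le : forall u v : 'I_5, (of_micro (lo u v) <= d point u v)%R)
           (hi_ge : forall u v : 'I_5, (d point u v <= of_micro (hi u v))%R)
           (lo_gt0 : forall u v : 'I_5, u != v -> (0 < lo u v)).

Section Profile.
Variables (s : profile 5) (A : adjacency).
Hypothesis A_s : forall x y : 'I_5, arc A x y = (y \in s x).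

Lemma greedy_arcE (v x y : 'I_5) :
  greedy_arc A v x y = (y \in s x) && (d point y v < d point x v)%R.
Proof. by rewrite /greedy_arc A_s d_point_lt. Qed.

Lemma lower_potential_sound (v : 'I_5) g : lower_potential lo A v g ->
  forall x p, greedy_path point s x v p -> (of_micro (pot g x) <= path_length point x p)%R.
Proof.
case/andP => /Z.leb_le gv /all_ptsP arcs; apply: potential_le_path_length.
  by rewrite -of_micro0 of_micro_le; apply/Z.leb_le.
move=> x y ysx ltyx; move/all_ptsP/(_ y): (arcs x); rewrite greedy_arcE ysx ltyx /=.
move=> /Z.leb_le le_g; apply: le_trans (_ : of_micro (lo x y + pot g y) <= _)%R.
  by rewrite of_micro_le; apply/Z.leb_le.
by rewrite of_microD lerD2r.
Qed.

Lemma upper_potential_sound (v u : 'I_5) f : upper_potential hi A v f ->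
  (pot f u <? unreached) ->
  exists2 p, greedy_path point s u v p & (path_length point u p <= of_micro (pot f u))%R.
Proof.
case/andP => /Z.leb_le fv /all_ptsP steps reached.
apply: (potential_greedy_path (f := fun x => of_micro (pot f x))
          (R := fun x : 'I_5 => pot f x <? unreached) _ _ reached).
  by rewrite -of_micro0 of_micro_le; apply/Z.leb_le.
move=> x fx xv; move: (steps x); rewrite (xv : val x != val v) fx !implyTb.
case/has_ptsP => y /andP[]; rewrite greedy_arcE => /andP[ysx ltyx] /Z.leb_le le_f.
have hi_ge0 : (0 <= hi x y).
  by apply/Z.leb_le; rewrite -of_micro_le of_micro0 (le_trans (d_ge0 _ _ _) (hi_ge x y)).
exists y; split => //; first by apply/Z.ltb_lt; move/Z.ltb_lt: fx; lia.
apply: le_trans (_ : of_micro (hi x y) + of_micro (pot f y) <= _)%R.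
  by rewrite lerD2r.
by rewrite -of_microD of_micro_le; apply/Z.leb_le.
Qed.

Lemma stretch_le_micro Z (u v : 'I_5) F : u != v -> upper_potential hi A v F ->
  (pot F u <? unreached) ->
  (stretch point Z s u v <= of_micro (Zdiv_up (pot F u * scale) (lo u v)))%R.
Proof.
move=> uv pot reached; have [p gp lp] := upper_potential_sound pot reached.
have L_gt0 : (0 < of_micro (lo u v))%R by rewrite -of_micro0 of_micro_lt; apply/Z.ltb_lt/lo_gt0.
apply: le_trans (stretch_le_path Z gp) _; apply: le_trans (of_micro_ratio_le _ (lo_gt0 uv)).
apply: ler_pM; rewrite ?path_length_ge0 ?invr_ge0 ?d_ge0 //.
by rewrite lef_pV2 ?posrE // (lt_le_trans L_gt0).
Qed.

Lemma micro_le_stretch Z (u v : 'I_5) G : u != v -> (exists p, greedy_path point s u v p) ->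
  lower_potential lo A v G -> (0 <= pot G u) ->
  (of_micro (pot G u * scale / hi u v) <= stretch point Z s u v)%R.
Proof.
move=> uv reach pot G_ge0.
have d_gt0 : (0 < d point u v)%R.
  by apply: lt_le_trans (lo_le u v); rewrite -of_micro0 of_micro_lt; apply/Z.ltb_lt/lo_gt0.
have H_gt0 : (0 < hi u v).
  by apply/Z.ltb_lt; rewrite -of_micro_lt of_micro0 (lt_le_trans d_gt0 (hi_ge u v)).
apply: le_trans (of_micro_ratio_ge _ H_gt0) _.
apply: le_trans (stretch_ge Z reach (lower_potential_sound pot (x := u))).
rewrite ler_wpM2l ?lef_pV2 ?posrE ?(lt_le_trans d_gt0) //.
by rewrite -of_micro0 of_micro_le; apply/Z.leb_le.
Qed.

End Profile.

Variables (s : profile 5) (A : adjacency).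
Hypotheses (A_s : forall x y : 'I_5, arc A x y = (y \in s x)) (s_valid : valid_profile s).

Lemma swap_improves_cheaper alpha Z (u w w' : 'I_5) :
  (forall v, exists p, greedy_path point s u v p) -> swap_improves lo hi A u w w' ->
  exists S', [/\ valid_strategy u S', single_change (s u) S' &
                 (cost point alpha Z (update s u S') u < cost point alpha Z s u)%R].
Proof.
move=> reach; rewrite /swap_improves A_s A_s; case: ifP => // /and3P[wsu w'su w'u].
case/andP => /all_ptsP checks cheaper.
set S' := w' |: (s u :\ w); exists S'; split.
- by rewrite /valid_strategy in_setU1 in_setD1 negb_or negb_and s_valid orbT andbT eq_sym.
- by right; right; exists w, w'.
rewrite cost_update /cost cardsU1 in_setD1 (negbTE w'su) andbF add1n.
rewrite [#|s u|](cardsD1 w) wsu add1n ltrD2r.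
have A'_s := arc_swap u w w' A_s.
move: cheaper; rewrite -of_micro_lt !of_micro_sum_others => cheaper.
apply: le_lt_trans (lt_le_trans cheaper _); apply: ler_sum => v vu; have uv : u != v by rewrite eq_sym.
all: move: (checks v); rewrite (vu : val v != val u) implyTb !nth_map_pts.
  by case/and4P => up reached _ _; apply: stretch_le_micro A'_s Z u v _ uv up reached.
by case/and4P => _ _ low /Z.leb_le g_ge0; apply: micro_le_stretch A_s Z u v _ uv (reach v) low g_ge0.
Qed.

End Soundness.

Definition row_of (s : profile 5) (x : nat) : seq bool := [seq inord y \in s (inord x) | y <- pts].
Definition rows_of (s : profile 5) : adjacency := [seq row_of s x | x <- pts].

Lemma nth_row_of s (x y : 'I_5) : nth false (row_of s x) y = (y \in s x).
Proof. by rewrite /row_of nth_map_pts !inord_val. Qed.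

Lemma arc_rows_of s (x y : 'I_5) : arc (rows_of s) x y = (y \in s x).
Proof. by rewrite /arc /rows_of nth_map_pts nth_row_of. Qed.

Lemma lazy_has_ptsP (a : pred nat) : reflect (exists x : 'I_5, a x) (lazy_has a pts).
Proof.
have -> : lazy_has a pts = has a pts by elim: pts => //= x l ->; case: (a x).
exact: has_ptsP.
Qed.

Lemma lookup_table D (u v : 'I_5) : lookup (table D) u v = D u v.
Proof. by rewrite /lookup /table !nth_map_pts. Qed.

Lemma bool_rows_size k (r : seq bool) : size r = k -> r \in bool_rows k.
Proof.
elim: k r => [|k IH] [|b r] // [size_r].
by apply: (@allpairs_f _ _ _ (fun b r => b :: r)); [case: b | apply: IH].
Qed.

Lemma candidate_profilesP (R : nat -> seq bool) :
  (forall x : 'I_5, minimal_covering_row x (R x)) -> (forall x : 'I_5, size (R x) = 5) ->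
  [seq R x | x <- pts] \in candidate_profiles.
Proof.
move=> Rmin Rsize; rewrite /candidate_profiles.
have : forall x, x \in pts -> R x \in candidate_rows x.
  move=> x; rewrite mem_iota add0n => x_lt5; rewrite mem_filter.
  by rewrite (Rmin (Ordinal x_lt5)) bool_rows_size // (Rsize (Ordinal x_lt5)).
elim: pts => [|x l IH] Rcand; first by rewrite inE.
apply: (@allpairs_f _ _ _ (fun r A => r :: A)); first by apply: Rcand; rewrite mem_head.
by apply: IH => y yl; apply: Rcand; rewrite in_cons yl orbT.
Qed.

Section NoEquilibrium.
Variables (penalty : RR) (s : profile 5).
Hypotheses (penalty_ge : 250 <= penalty :> RR) (s_valid : valid_profile s).
Hypothesis s_ge : greedy_equilibrium point 200%:R penalty s.

Let alpha_gt : (5.-1)%:R * ((5.-1)%:R * 30 / 6) < 200%:R :> RR.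
Proof. rewrite /=; lra. Qed.

Let penalty_gt : 200%:R + (5.-1)%:R * 30 / 6 < penalty :> RR.
Proof. by apply: lt_le_trans penalty_ge; rewrite /=; lra. Qed.

Let dmin_le_dmax : 6 <= 30 :> RR.
Proof. lra. Qed.

Let reachable := ge_reachable (ltr0n _ 6) dmin_le_dmax d_point_between s_valid s_ge alpha_gt penalty_gt.
Let covering := ge_covering (ltr0n _ 6) dmin_le_dmax d_point_between s_valid s_ge alpha_gt penalty_gt.
Let minimal := ge_minimal (ltr0n _ 6) dmin_le_dmax d_point_between s_valid s_ge alpha_gt penalty_gt.

Lemma ge_minimal_covering_row (x : 'I_5) : minimal_covering_row x (row_of s x).
Proof.
have row_s (y : 'I_5) : nth false (row_of s x) y = (y \in s x) := nth_row_of s x y.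
apply/and3P; split; first by rewrite row_s s_valid.
  apply/all_ptsP => v; have [->|vx] := eqVneq v x; first by rewrite eqxx.
  have xv : x != v by rewrite eq_sym.
  have [y ysx ltyx] := covering xv.
  by apply/orP; right; apply/has_ptsP; exists y; rewrite row_s ysx -d_point_lt.
apply/all_ptsP => w; apply/implyP; rewrite row_s => wsx; have [v vx far] := minimal wsx.
apply/negP => /all_ptsP/(_ v)/orP[/eqP/val_inj vx'|/has_ptsP[y]]; first by rewrite vx' eqxx in vx.
rewrite nth_set_nth /=; case: eqP => // /eqP yw; rewrite row_s -d_point_lt => /andP[ysx].
by rewrite ltNge far.
Qed.

Lemma no_greedy_equilibrium : False.
Proof.
have cand : rows_of s \in candidate_profiles.
  by apply: candidate_profilesP => x; rewrite ?ge_minimal_covering_row ?size_map ?size_iota.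
have := all_improvable_true; rewrite /all_improvable => /allP/(_ _ cand).
case/lazy_has_ptsP => u /lazy_has_ptsP[w /lazy_has_ptsP[w' improves]].
have lo_le (x y : 'I_5) : of_micro (lookup (table dlo) x y) <= d point x y.
  by rewrite lookup_table dlo_le.
have hi_ge (x y : 'I_5) : d point x y <= of_micro (lookup (table dhi) x y).
  by rewrite lookup_table dhi_ge.
have lo_gt0 (x y : 'I_5) : x != y -> Z.lt 0 (lookup (table dlo) x y).
  by rewrite lookup_table; apply: dlo_gt0.
have [S' [valid' change cheaper]] := swap_improves_cheaper lo_le hi_ge lo_gt0 (arc_rows_of s)
  s_valid 200%:R penalty (reachable u) improves.
by have := s_ge valid' change; rewrite leNgt cheaper.
Qed.

End NoEquilibrium.

Theorem theorem4p1 :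
  exists (n : nat) (pos : 'I_n -> RR * RR), injective pos /\
  exists alpha : RR, 0 < alpha /\
  exists Z0 : RR, forall Z : RR, Z0 <= Z ->
    (forall s : profile n, valid_profile s ->
       ~ greedy_equilibrium pos alpha Z s) /\
    (forall s : profile n, valid_profile s ->
       ~ nash_equilibrium pos alpha Z s).
Proof.
exists 5%N, point; split; first exact: point_injective.
exists 200%:R; split; first by rewrite ltr0n.
exists 250%:R => Z Z_ge; split=> s s_valid s_eq.
  exact: no_greedy_equilibrium Z_ge s_valid s_eq.
exact: no_greedy_equilibrium Z_ge s_valid (nash_greedy_equilibrium s_eq).
Qed.
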